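(* Let $G$ be a group endowed with a topology (no compatibility between the group structure and the topology is assumed). Suppose there exists an integer $c>0$ such that every solvable subgroup of $G$ has derived length at most $c$. Then every solvable (resp. connected solvable) subgroup of $G$ is contained in a maximal solvable (resp. maximal connected solvable) subgroup of $G$.
   Context: Derived length of a solvable group $H$: the least $k$ with $D^k(H)=\{1\}$, where $D^0(H)=H$ and $D^{k}(H)$ is the commutator subgroup of $D^{k-1}(H)$. A subgroup is connected if it is connected for the induced topology. *)

From HB Require Import structures.
From mathcomp Require Import all_boot all_order.
From mathcomp Require Import boolp classical_sets topology.
Set Implicit Arguments. Unset Strict Implicit. Unset Printing Implicit Defensive.
Local Open Scope classical_set_scope.

Record is_group_law (T : Type) (mul : T -> T -> T) (one : T) (inv : T -> T) : Prop := {
  gmulA : forall x y z, mul x (mul y z) = mul (mul x y) z;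
  gmul1 : forall x, mul one x = x;
  gmulV : forall x, mul (inv x) x = one }.

Section GroupDefs.
Variables (T : Type) (mul : T -> T -> T) (one : T) (inv : T -> T).

Definition is_subgroup (H : set T) : Prop :=
  H one /\ (forall x y, H x -> H y -> H (mul x y)) /\ (forall x, H x -> H (inv x)).

Definition gen_subgroup (S : set T) : set T :=
  fun x => forall K, is_subgroup K -> S `<=` K -> K x.

Definition commg (x y : T) : T := mul (mul (inv x) (inv y)) (mul x y).

Definition derived_subgroup (H : set T) : set T :=
  gen_subgroup [set commg x y | x in H & y in H].

Fixpoint derived_series (k : nat) (H : set T) : set T :=
  match k with
  | 0 => H
  | k'.+1 => derived_subgroup (derived_series k' H)
  end.

Definition solvable_sg (H : set T) : Prop :=
  exists k, derived_series k H = [set one].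

Definition derived_length_le (H : set T) (c : nat) : Prop :=
  exists k, (k <= c)%N /\ derived_series k H = [set one].

Definition maximal_solvable (M : set T) : Prop :=
  is_subgroup M /\ solvable_sg M /\
  forall K, is_subgroup K -> solvable_sg K -> M `<=` K -> K = M.

End GroupDefs.

Section TopDefs.
Variables (T : topologicalType) (mul : T -> T -> T) (one : T) (inv : T -> T).

Definition maximal_connected_solvable (M : set T) : Prop :=
  is_subgroup mul one inv M /\ solvable_sg mul one inv M /\ connected M /\
  forall K, is_subgroup mul one inv K -> solvable_sg mul one inv K ->
    connected K -> M `<=` K -> K = M.
End TopDefs.

(* Under the hypothesis, the solvable subgroups are exactly the subgroups H
   with D^c(H) = 1. This property passes to the union of a nonempty chain of
   subgroups, because D^c of the union lies in the union of the D^c of the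
   members; so does connectedness, since all members contain 1. Zorn's lemma
   then gives a maximal element above any solvable (connected) subgroup. *)
From Pilot Require Import Defs.
From mathcomp Require Import all_boot all_order.
From mathcomp Require Import boolp classical_sets topology.
Set Implicit Arguments. Unset Strict Implicit. Unset Printing Implicit Defensive.
Local Open Scope classical_set_scope.

Section ZornAbove.
Variables (T : Type) (P : set (set T)).

(* [Zorn_bigcup] also demands the empty union; shifting every set by [H]
   avoids it. *)
Lemma Zorn_bigcup_above (H : set T) : P H ->
    (forall F : set (set T), F `<=` P -> total_on F subset -> F !=set0 ->
      P (\bigcup_(X in F) X)) ->
  exists2 M, P M /\ H `<=` M & forall B, M `<=` B -> P B -> B = M.
Proof.
move=> PH chainP.
pose Q X := P (H `|` X).
have chainQ F : F `<=` Q -> total_on F subset -> Q (\bigcup_(X in F) X).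
  move=> FQ totF; have [->|/set0P[X0 FX0]] := eqVneq F set0.
    by rewrite /Q bigcup_set0 setU0.
  rewrite /Q; have -> : H `|` \bigcup_(X in F) X = \bigcup_(Y in (setU H) @` F) Y.
    apply/seteqP; split => [x [Hx|[X FX Xx]]|x [_ [X FX <-] [Hx|Xx]]].
    - by exists (H `|` X0); [exists X0 | left].
    - by exists (H `|` X); [exists X | right].
    - by left.
    - by right; exists X.
  apply: chainP.
  - by move=> _ [X FX <-]; apply: FQ.
  - move=> _ _ [X FX <-] [Y FY <-].
    by case: (totF _ _ FX FY) => XY; [left|right]; apply: setUS.
  - by exists (H `|` X0), X0.
have [A [QA maxA]] := Zorn_bigcup chainQ.
exists (H `|` A) => [|B HAB PB]; first by split => // x Hx; left.
have QB : Q B by rewrite /Q (setUidr (subset_trans (@subsetUl _ H A) HAB)).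
have AB : A `<=` B := subset_trans (@subsetUr _ H A) HAB.
have BA : B `<=` A by apply: contrapT => nBA; exact: (maxA B).
by apply/seteqP; split => // x /BA Ax; right.
Qed.

End ZornAbove.

Section DerivedSeries.
Variables (T : Type) (mul : T -> T -> T) (one : T) (inv : T -> T).
Hypothesis hG : is_group_law mul one inv.
Local Notation subgroup := (is_subgroup mul one inv).
Local Notation gen := (gen_subgroup mul one inv).
Local Notation D := (derived_series mul one inv).

Lemma mulgV x : mul x (inv x) = one.
Proof.
case: hG => mulA mul1 mulV.
rewrite -[mul x _]mul1 -{1}(mulV (inv x)) -mulA (mulA (inv x)) mulV mul1.
exact: mulV.
Qed.

Lemma mulg1 x : mul x one = x.
Proof. case: hG => mulA mul1 mulV; by rewrite -(mulV x) mulA mulgV mul1. Qed.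

Lemma invg1 : inv one = one.
Proof. case: hG => _ _ mulV; by rewrite -[inv one]mulg1 mulV. Qed.

Lemma subgroup1 : subgroup [set one].
Proof.
case: hG => _ mul1 _; split => //; split; first by move=> x y -> ->; rewrite mul1.
by move=> x ->; rewrite invg1.
Qed.

Lemma gen_subgroupP S : subgroup (gen S).
Proof.
split; first by move=> K [].
split=> [x y Sx Sy K sgK SK | x Sx K sgK SK]; case: (sgK) => _ [mulK invK].
  by apply: mulK; [apply: Sx | apply: Sy].
by apply: invK; apply: Sx.
Qed.

Lemma gen_subgroup_min S K : subgroup K -> S `<=` K -> gen S `<=` K.
Proof. by move=> sgK SK x; apply. Qed.

Lemma sub_gen_subgroup S : S `<=` gen S.
Proof. by move=> x Sx K _; apply. Qed.

Lemma derived_series_subgroup k H : subgroup H -> subgroup (D k H).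
Proof. by case: k => [|k] //= _; apply: gen_subgroupP. Qed.

Lemma derived_seriesS k H K : H `<=` K -> D k H `<=` D k K.
Proof.
elim: k => [|k IHk] //= HK; apply: gen_subgroup_min; first exact: gen_subgroupP.
move=> _ [x Hx [y Hy <-]]; apply: sub_gen_subgroup.
by exists x; [exact: IHk | exists y; [exact: IHk|]].
Qed.

Lemma derived_series_trivial_le k n H :
  (k <= n)%N -> D k H = [set one] -> D n H = [set one].
Proof.
case: hG => _ mul1 _ /subnK <-; elim: (n - k)%N => [|m IHm] // Dk1.
rewrite addSn /= IHm //.
rewrite /derived_subgroup; set S := [set _ | _ in _ & _ in _].
apply/seteqP; split; last by move=> x ->; case: (gen_subgroupP S).
apply: gen_subgroup_min; first exact: subgroup1.
by move=> _ [x -> [y -> <-]]; rewrite /Defs.commg invg1 !mul1.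
Qed.

Lemma bigcup_chain_subgroup (F : set (set T)) :
    total_on F subset -> F !=set0 -> (forall K, F K -> subgroup K) ->
  subgroup (\bigcup_(K in F) K).
Proof.
move=> chainF neF subgroupF.
have [K0 FK0] := neF; split; first by exists K0 => //; case: (subgroupF _ FK0).
split=> [x y [K1 FK1 xK1] [K2 FK2 yK2] | x [K FK xK]]; last first.
  by exists K => //; case: (subgroupF _ FK) => _ [_]; apply.
have [K12|K21] := chainF _ _ FK1 FK2.
  by exists K2 => //; case: (subgroupF _ FK2) => _ [+ _]; apply=> //; apply: K12.
by exists K1 => //; case: (subgroupF _ FK1) => _ [+ _]; apply=> //; apply: K21.
Qed.

Lemma derived_series_bigcup_chain (F : set (set T)) k :
    total_on F subset -> F !=set0 -> (forall K, F K -> subgroup K) ->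
  D k (\bigcup_(K in F) K) `<=` \bigcup_(K in F) D k K.
Proof.
move=> chainF neF subgroupF; elim: k => [|k IHk] //=.
have chainDF : total_on ((D k.+1) @` F) subset.
  move=> _ _ [K1 FK1 <-] [K2 FK2 <-].
  by case: (chainF _ _ FK1 FK2) => K12; [left|right]; apply: derived_seriesS.
have subgroupDF K : ((D k.+1) @` F) K -> subgroup K.
  by move=> [K' FK' <-]; apply: derived_series_subgroup; apply: subgroupF.
have [K0 FK0] := neF.
have ubDF : \bigcup_(K in (D k.+1) @` F) K `<=` \bigcup_(K in F) D k.+1 K.
  by move=> x [_ [K FK <-] xK]; exists K.
apply: subset_trans ubDF; apply: gen_subgroup_min.
  exact: (bigcup_chain_subgroup chainDF (ex_intro _ _ (imageP _ FK0)) subgroupDF).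
move=> _ [x /IHk [K1 FK1 xK1] [y /IHk [K2 FK2 yK2] <-]].
have [K12|K21] := chainF _ _ FK1 FK2.
  exists (D k.+1 K2); first exact: imageP.
  by apply: sub_gen_subgroup; exists x; [exact: derived_seriesS K12 _ _|exists y].
exists (D k.+1 K1); first exact: imageP.
apply: sub_gen_subgroup; exists x => //.
by exists y => //; exact: derived_seriesS K21 _ _.
Qed.

End DerivedSeries.

Section MaximalSolvable.
Variables (T : Type) (mul : T -> T -> T) (one : T) (inv : T -> T).
Hypothesis hG : is_group_law mul one inv.
Local Notation subgroup := (is_subgroup mul one inv).
Local Notation solvable := (solvable_sg mul one inv).
Local Notation D := (derived_series mul one inv).

Variable c : nat.
Hypothesis derived_length_bounded : forall H, subgroup H -> solvable H ->
  derived_length_le mul one inv H c.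

Lemma solvable_derived_series_trivial H :
  subgroup H -> solvable H -> D c H = [set one].
Proof.
move=> sgH /(derived_length_bounded sgH) [k [le_kc Dk1]].
exact: derived_series_trivial_le le_kc Dk1.
Qed.

Lemma bigcup_chain_derived_series_trivial (F : set (set T)) :
    total_on F subset -> F !=set0 ->
    (forall K, F K -> subgroup K /\ D c K = [set one]) ->
  D c (\bigcup_(K in F) K) = [set one].
Proof.
move=> chainF neF hF; have subgroupF K (FK : F K) := (hF K FK).1.
apply/seteqP; split.
  move=> x /(derived_series_bigcup_chain chainF neF subgroupF) [K FK].
  by rewrite (hF K FK).2.
have sgD := derived_series_subgroup c (bigcup_chain_subgroup chainF neF subgroupF).
by move=> x ->; case: sgD.
Qed.

Variable Q : set T -> Prop.
Hypothesis Q_bigcup_chain : forall F : set (set T),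
  total_on F subset -> F !=set0 -> (forall K, F K -> subgroup K /\ Q K) ->
  Q (\bigcup_(K in F) K).

Lemma exists_maximal_solvable_above H : subgroup H -> solvable H -> Q H ->
  exists2 M, [/\ subgroup M, solvable M & Q M] /\ H `<=` M &
    forall K, subgroup K -> solvable K -> Q K -> M `<=` K -> K = M.
Proof.
move=> sgH solH QH.
pose P X := [/\ subgroup X, D c X = [set one] & Q X].
have PH : P H by split => //; apply: solvable_derived_series_trivial.
have chainP F : F `<=` P -> total_on F subset -> F !=set0 ->
    P (\bigcup_(X in F) X).
  move=> FP chainF neF; have subgroupF K : F K -> subgroup K by move=> /FP[].
  split; first exact: bigcup_chain_subgroup.
    by apply: bigcup_chain_derived_series_trivial => // K /FP[].
  by apply: Q_bigcup_chain => // K /FP[].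
have [M [[sgM DM QM] HM] maxM] := Zorn_bigcup_above PH chainP.
exists M => [|K sgK solK QK MK]; first by split => //; split => //; exists c.
by apply: maxM => //; split => //; apply: solvable_derived_series_trivial.
Qed.

End MaximalSolvable.

Lemma connected_bigcup_subgroups (T : topologicalType)
    (mul : T -> T -> T) (one : T) (inv : T -> T) (F : set (set T)) :
    (forall K, F K -> is_subgroup mul one inv K /\ connected K) ->
  connected (\bigcup_(K in F) K).
Proof.
move=> hF; apply: bigcup_connected; last by move=> K /hF[].
by exists one => K /hF[[]].
Qed.

Theorem proposition3p10 (T : topologicalType)
  (mul : T -> T -> T) (one : T) (inv : T -> T)
  (hG : is_group_law mul one inv) (c : nat) (c_gt0 : (0 < c)%N)
  (hc : forall H : set T, is_subgroup mul one inv H ->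
          solvable_sg mul one inv H -> derived_length_le mul one inv H c) :
  (forall H : set T, is_subgroup mul one inv H -> solvable_sg mul one inv H ->
     exists M : set T, maximal_solvable mul one inv M /\ H `<=` M) /\
  (forall H : set T, is_subgroup mul one inv H -> solvable_sg mul one inv H ->
     connected H ->
     exists M : set T, maximal_connected_solvable mul one inv M /\ H `<=` M).
Proof.
split=> [H sgH solH | H sgH solH connH].
  have [M [[sgM solM _] HM] maxM] :=
    exists_maximal_solvable_above hG hc (fun _ _ _ _ => I) sgH solH I.
  by exists M; split => //; split => //; split => // K sgK solK; apply: maxM.
have connected_bigcup_chain F (_ : total_on F subset) (_ : F !=set0) :=
  @connected_bigcup_subgroups T mul one inv F.
have [M [[sgM solM connM] HM] maxM] :=
  exists_maximal_solvable_above hG hc connected_bigcup_chain sgH solH connH.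
by exists M.
Qed.
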